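(* Let $n$ be a positive integer and $k$ an integer with $0\le k\le n$. Then $$e_k\left(\left\{\csc^2\left(\tfrac{(2j-1)\pi}{4n}\right) : j=1,\dots,n\right\}\right) = \frac{n\,(n+k-1)!\,4^k}{(n-k)!\,(2k)!}.$$
   Context: $e_k(\alpha_1,\dots,\alpha_n)$ denotes the degree-$k$ elementary symmetric function of $\alpha_1,\dots,\alpha_n$ (with $e_0=1$). *)

From HB Require Import structures.
From mathcomp Require Import all_boot all_order all_algebra.
From mathcomp Require Import all_classical all_reals all_analysis.
Set Implicit Arguments. Unset Strict Implicit. Unset Printing Implicit Defensive.
Import Order.TTheory GRing.Theory Num.Theory.
Local Open Scope ring_scope.

Definition elem_sym (R : comNzRingType) (n k : nat) (x : 'I_n -> R) : R :=
  \sum_(S : {set 'I_n} | #|S| == k) \prod_(j in S) x j.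

Definition csc (R : realType) (t : R) : R := (sin t)^-1.

From HB Require Import structures.
From mathcomp Require Import all_boot all_order all_algebra.
From mathcomp Require Import all_classical all_reals all_analysis.
From mathcomp Require Import ring lra zify.

Set Implicit Arguments.
Unset Strict Implicit.
Unset Printing Implicit Defensive.

Import Order.TTheory GRing.Theory Num.Theory.
Local Open Scope ring_scope.

(* Writing y = sin^2 t, the identity cos (2nt) = T_n(1 - 2y) makes
   2 cos (2nt) a polynomial of degree n in y, with coefficients
   (-4)^k (C(n+k, 2k) + C(n+k-1, 2k)); these satisfy the Chebyshev recurrence
   thanks to Pascal's rule.  Since cos (2n theta_j) = 0, the reciprocal of this
   polynomial, of leading coefficient 2, has the n distinct roots
   csc^2 theta_j, and Vieta's formulas read e_k off its coefficient of degree
   n - k.  Finally C(n+k, 2k) + C(n+k-1, 2k) = 2n (n+k-1)! / ((n-k)! (2k)!). *)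

Lemma bin_second_diff M j :
  ('C(M.+2, j.+2) + 'C(M, j.+2) = 2 * 'C(M.+1, j.+2) + 'C(M, j))%N.
Proof. rewrite !binS; lia. Qed.

Definition cheb_coef (n k : nat) : nat := 'C(n + k, k.*2) + 'C(n + k - 1, k.*2).

Lemma cheb_coef0 n : cheb_coef n 0 = 2%N.
Proof. by rewrite /cheb_coef !bin0. Qed.

Lemma cheb_coef_small n k : (n < k)%N -> cheb_coef n k = 0%N.
Proof. by move=> lt_nk; rewrite /cheb_coef !bin_small //; lia. Qed.

Lemma cheb_coefSS n k :
  (cheb_coef n.+2 k.+1 + cheb_coef n k.+1 = 2 * cheb_coef n.+1 k.+1 + cheb_coef n.+1 k)%N.
Proof.
rewrite /cheb_coef !addSn !addnS !subn1 /= !doubleS.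
have := bin_second_diff (n + k).+1 k.*2; have := bin_second_diff (n + k) k.*2.
lia.
Qed.

Lemma cheb_coef_fact n k : (0 < n)%N -> (k <= n)%N ->
  (cheb_coef n k * ((n - k)`! * (2 * k)`!) = 2 * (n * (n + k - 1)`!))%N.
Proof.
move=> n_gt0 le_kn; rewrite /cheb_coef -mul2n mulnDl.
have factE m : (0 < m)%N -> (m`! = m * (m - 1)`!)%N.
  by case: m => // m _; rewrite factS subn1.
have bin_top := @bin_fact (n + k) (2 * k) ltac:(lia).
rewrite (_ : n + k - 2 * k = n - k)%N in bin_top; last lia.
have := factE (n + k)%N ltac:(lia).
case: (ltngtP k n) le_kn => // [lt_kn|eq_kn] _; last first.
  subst k; rewrite (@bin_small (n + n - 1)) ?mul0n ?addn0; last lia.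
  rewrite subnn fact0 in bin_top *; nia.
have bin_bot := @bin_fact (n + k - 1) (2 * k) ltac:(lia).
rewrite (_ : n + k - 1 - 2 * k = n - k - 1)%N in bin_bot; last lia.
have := factE (n - k)%N ltac:(lia).
nia.
Qed.

Lemma cheb_coef_closed (F : numFieldType) n k : (0 < n)%N -> (k <= n)%N ->
  (n * (n + k - 1)`! * 4 ^ k)%:R / ((n - k)`! * (2 * k)`!)%:R
  = 4 ^+ k * (cheb_coef n k)%:R / 2 :> F.
Proof.
move=> n_gt0 le_kn; apply/eqP.
rewrite eqr_div ?pnatr_eq0 -?lt0n ?muln_gt0 ?fact_gt0 //; apply/eqP.
by rewrite -mulrA -(natrM _ (cheb_coef n k)) cheb_coef_fact // !natrM natrX; ring.
Qed.

Section Chebyshev.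
Variable R : comNzRingType.

(* [cheb n] is 2 T_n(1 - 2X), T_n the Chebyshev polynomial of the first kind. *)
Definition cheb (n : nat) : {poly R} := \poly_(i < n.+1) ((-4) ^+ i * (cheb_coef n i)%:R).

Lemma coef_cheb n i : (cheb n)`_i = (-4) ^+ i * (cheb_coef n i)%:R.
Proof.
by rewrite coef_poly; case: ltnP => // lt_ni; rewrite cheb_coef_small ?mulr0.
Qed.

Lemma cheb0 : cheb 0 = 2%:P.
Proof.
apply/polyP => -[|i]; rewrite coef_cheb coefC /=.
- by rewrite cheb_coef0 mul1r.
- by rewrite cheb_coef_small ?mulr0.
Qed.

Lemma cheb1 : cheb 1 = 2%:P - 4%:P * 'X.
Proof.
apply/polyP => -[|[|i]]; rewrite coef_cheb coefB coefCM coefC coefX //=.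
- by rewrite cheb_coef0 mulr0 subr0 mul1r.
- by rewrite (_ : cheb_coef 1 1 = 1%N) // expr1 mulr1 sub0r mulr1.
- by rewrite cheb_coef_small // !mulr0 subrr.
Qed.

Lemma chebSS n : cheb n.+2 = (2%:P - 4%:P * 'X) * cheb n.+1 - cheb n.
Proof.
apply/polyP => -[|i]; rewrite mulrBl -mulrA !coefB !coefCM coefXM !coef_cheb /=.
  by rewrite !cheb_coef0 !mulr0 subr0; ring.
have rec : (cheb_coef n.+2 i.+1)%:R = 2 * (cheb_coef n.+1 i.+1)%:R
    + (cheb_coef n.+1 i)%:R - (cheb_coef n i.+1)%:R :> R.
  by apply/eqP; rewrite eq_sym subr_eq -natrM -!natrD cheb_coefSS.
rewrite rec exprS; ring.
Qed.

End Chebyshev.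

Section Reciprocal.
Variable F : fieldType.
Implicit Types (p : {poly F}) (n : nat).

Definition reciprocal n p : {poly F} := \poly_(i < n.+1) p`_(n - i).

Lemma coef_reciprocal n p i : (i <= n)%N -> (reciprocal n p)`_i = p`_(n - i).
Proof. by rewrite coef_poly ltnS => ->. Qed.

Lemma size_reciprocal n p : p`_0 != 0 -> size (reciprocal n p) = n.+1.
Proof. by move=> p0; rewrite size_poly_eq //= subnn. Qed.

Lemma lead_coef_reciprocal n p : p`_0 != 0 -> lead_coef (reciprocal n p) = p`_0.
Proof. by move=> p0; rewrite lead_coef_poly //= subnn. Qed.

Lemma horner_reciprocal n p x : (size p <= n.+1)%N -> x != 0 ->
  (reciprocal n p).[x] = x ^+ n * p.[x^-1].
Proof.
move=> le_p_n x_neq0; rewrite horner_poly (horner_coef_wide _ le_p_n) mulr_sumr.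
rewrite (reindex_inj rev_ord_inj); apply: eq_bigr => i _ /=.
have le_in : (i <= n)%N by rewrite -ltnS.
by rewrite subSS subKn // expfB_cond ?(negbTE x_neq0) // exprVn mulrCA.
Qed.

End Reciprocal.

Lemma coef_elem_sym_roots (F : fieldType) n (p : {poly F}) (x : 'I_n -> F) k :
  size p = n.+1 -> injective x -> (forall j, root p (x j)) -> (k <= n)%N ->
  p`_(n - k) = lead_coef p * (-1) ^+ k * elem_sym k x.
Proof.
move=> size_p x_inj x_root le_kn.
pose rs := [seq x j | j <- enum 'I_n].
have size_rs : size rs = n by rewrite size_map size_enum_ord.
have rs_root : all (root p) rs by apply/allP => _ /mapP[j _ ->].
have rs_uniq : uniq_roots rs by rewrite uniq_rootsE map_inj_uniq ?enum_uniq.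
have size_p_rs : size p = (size rs).+1 by rewrite size_p size_rs.
rewrite {1}(all_roots_prod_XsubC size_p_rs rs_root rs_uniq) coefZ -{1}size_rs.
rewrite coef_prod_XsubC ?leq_subr // size_rs subKn // -mulrA.
congr (_ * (_ * _)).
apply: eq_bigr => S _; apply: eq_bigr => j _.
by rewrite (nth_map j) ?size_enum_ord // nth_ord_enum.
Qed.

Section RootAngles.
Variable R : realType.

Lemma cos_mulSS (a : R) m :
  cos (m.+2%:R * a) = 2 * cos a * cos (m.+1%:R * a) - cos (m%:R * a).
Proof.
have -> : m.+2%:R * a = m.+1%:R * a + a by rewrite -[m.+2%:R]natr1 mulrDl mul1r.
have -> : m%:R * a = m.+1%:R * a - a by rewrite -[m.+1%:R]natr1 mulrDl mul1r addrK.
rewrite cosD cosB; ring.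
Qed.

Lemma horner_cheb_sin2 n (t : R) : (cheb R n).[sin t ^+ 2] = 2 * cos (n%:R * (t *+ 2)).
Proof.
have cos2t : cos (t *+ 2) = 1 - 2 * sin t ^+ 2 by rewrite cos_mulr2n cos2sin2; ring.
suff /(_ n)[] : forall m, (cheb R m).[sin t ^+ 2] = 2 * cos (m%:R * (t *+ 2)) /\
    (cheb R m.+1).[sin t ^+ 2] = 2 * cos (m.+1%:R * (t *+ 2)) by [].
elim=> [|m [IHm IHm1]].
  rewrite cheb0 cheb1 !(hornerD, hornerN, hornerM, hornerC, hornerX).
  by rewrite mul0r mul1r cos0 cos2t; split; ring.
split=> //; rewrite chebSS !(hornerD, hornerN, hornerM, hornerC, hornerX).
by rewrite IHm IHm1 cos_mulSS cos2t; ring.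
Qed.

Definition root_angle n j : R := ((2 * j.+1 - 1)%N)%:R * pi / (4 * n)%:R.

Lemma root_angleE n j : root_angle n j = (2 * j%:R + 1) * pi / (4 * n%:R).
Proof.
rewrite /root_angle (_ : 2 * j.+1 - 1 = (2 * j).+1)%N; last lia.
by rewrite -natr1 !natrM.
Qed.

Lemma root_angle_bounds n j : (j < n)%N -> 0 < root_angle n j < pi / 2.
Proof.
move=> lt_jn; rewrite root_angleE.
have pi_gt0 := pi_gt0 R.
have j_ge0 := ler0n R j.
have jn : j%:R + 1 <= n%:R :> R by rewrite natr1 ler_nat.
apply/andP; split; first by apply: divr_gt0; nra.
by rewrite ltr_pdivrMr; nra.
Qed.

Lemma cos_root_angle n j : (j < n)%N -> cos (n%:R * (root_angle n j *+ 2)) = 0.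
Proof.
move=> lt_jn; have n_neq0 : n%:R != 0 :> R by rewrite pnatr_eq0 -lt0n; lia.
have -> : n%:R * (root_angle n j *+ 2) = pi / 2 + pi *+ j.
  by rewrite root_angleE mulr2n -mulr_natr; field.
by rewrite (alternatingn (@cosDpi R)) cos_pihalf mulr0.
Qed.

Lemma root_angle_inj n : (0 < n)%N -> injective (root_angle n).
Proof.
move=> n_gt0 i j; rewrite !root_angleE.
have denom_neq0 : (4 * n%:R)^-1 != 0 :> R by rewrite invr_eq0 mulf_neq0 ?pnatr_eq0 -?lt0n.
have two_neq0 : 2 != 0 :> R by rewrite pnatr_eq0.
move=> /(mulIf denom_neq0) /(mulIf (lt0r_neq0 (pi_gt0 R))) /addIr /(mulfI two_neq0).
by move=> /eqP; rewrite eqr_nat => /eqP.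
Qed.

Lemma csc2_root_angle_inj n : injective (fun j : 'I_n => csc (root_angle n j) ^+ 2).
Proof.
move=> i j /=; rewrite /csc !exprVn => /invr_inj /eqP.
have bi := root_angle_bounds (ltn_ord i); have bj := root_angle_bounds (ltn_ord j).
rewrite eqrXn2 ?ltW ?sin_gt0_pihalf // => /eqP eq_sin.
have pi_gt0 := pi_gt0 R.
have /(root_angle_inj (leq_ltn_trans (leq0n _) (ltn_ord i))) : root_angle n i = root_angle n j.
  by apply: (sin_inj _ _ eq_sin); rewrite in_itv /=; apply/andP; split; lra.
exact: val_inj.
Qed.

Lemma root_reciprocal_cheb n j : (j < n)%N ->
  root (reciprocal n (cheb R n)) (csc (root_angle n j) ^+ 2).
Proof.
move=> lt_jn; have sin_gt0 := sin_gt0_pihalf (root_angle_bounds lt_jn).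
have sin2_neq0 : sin (root_angle n j) ^+ 2 != 0 by rewrite expf_neq0 // gt_eqF.
rewrite /root /csc exprVn horner_reciprocal ?size_poly ?invr_eq0 // invrK.
by rewrite horner_cheb_sin2 cos_root_angle // !mulr0.
Qed.

End RootAngles.

Theorem mainTheorem7 (R : realType) (n k : nat) (hn : (0 < n)%N) (hk : (k <= n)%N) :
  @elem_sym R n k (fun j : 'I_n => csc (((2 * j.+1 - 1)%N)%:R * pi / (4 * n)%:R) ^+ 2)
  = (n * (n + k - 1)`! * 4 ^ k)%:R / ((n - k)`! * (2 * k)`!)%:R :> R.
Proof.
have cheb_const_neq0 : (cheb R n)`_0 != 0 by rewrite coef_cheb cheb_coef0 mul1r pnatr_eq0.
have := coef_elem_sym_roots (size_reciprocal n cheb_const_neq0) (@csc2_root_angle_inj R n)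
  (fun j => root_reciprocal_cheb R (ltn_ord j)) hk.
rewrite lead_coef_reciprocal // coef_reciprocal ?leq_subr // subKn //.
rewrite !coef_cheb cheb_coef0 mul1r exprNn cheb_coef_closed // => coef_eq.
apply: (mulfI (_ : 2 * (-1) ^+ k != 0)); first by rewrite mulf_neq0 ?signr_eq0 ?pnatr_eq0.
by rewrite -coef_eq; field.
Qed.
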